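(* Let $m\ge 1$ and $n\ge 0$ be integers and let $M(h)$, $h\in(0,+\infty)$, be the first order Melnikov function of system $(1.1)_\epsilon$ described in the context. Then there exist real constants $\rho^{\pm}_{i,j}$ ($0\le i+j\le n$), depending on the coefficients of $p^\pm,q^\pm$, and a polynomial $\Phi$ of degree at most $m(n+1)$ such that $$M(h)=\sum_{i+j=0}^{n}\rho^{+}_{i,j}J_{i,j}(h)+\sum_{i+j=0}^{n}\rho^{-}_{i,j}I_{i,j}(h)+\Phi(u(h)),\qquad h\in(0,+\infty),$$ where $J_{i,j}(h)=\int_{L_h^+}x^iy^jdx$ and $I_{i,j}(h)=\int_{L_h^-}x^iy^jdx$.
   Context: System $(1.1)_\epsilon$: $\dot x=y+\epsilon p^{+}(x,y),\ \dot y=-x+\epsilon q^{+}(x,y)$ for $y\ge x^{m}$, and $\dot x=y+\epsilon p^{-}(x,y),\ \dot y=-x+\epsilon q^{-}(x,y)$ for $y<x^{m}$, where $p^{\pm}=\sum_{i+j=0}^{n}a^{\pm}_{i,j}x^iy^j$, $q^{\pm}=\sum_{i+j=0}^{n}b^{\pm}_{i,j}x^iy^j$ are real polynomials of degree $n$. For $h>0$ let $u=u(h)>0$ be the unique positive number with $u^2+u^{2m}=h$; the circle $x^2+y^2=h$ meets $y=x^m$ at $A=(-u,(-u)^m)$ and $B=(u,u^m)$. $L_h^{+}$ is the arc of this circle in $\{y\ge x^m\}$ traversed clockwise from $A$ to $B$, and $L_h^-$ the arc in $\{y\le x^m\}$ traversed clockwise from $B$ to $A$. The first order Melnikov function is $M(h)=\int_{L_h^+}q^+dx-p^+dy+\int_{L_h^-}q^-dx-p^-dy$.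 *)

From Stdlib Require Import Reals.
From Coquelicot Require Import Coquelicot.
Open Scope R_scope.

Definition poly2 (n : nat) (a : nat -> nat -> R) (x y : R) : R :=
  sum_f_R0 (fun i => sum_f_R0 (fun j => a i j * x ^ i * y ^ j) (n - i)) n.

Definition sum2 (n : nat) (F : nat -> nat -> R) : R :=
  sum_f_R0 (fun i => sum_f_R0 (fun j => F i j) (n - i)) n.

Definition poly1 (d : nat) (c : nat -> R) (t : R) : R :=
  sum_f_R0 (fun k => c k * t ^ k) d.

Definition lineint (P Q : R -> R -> R) (gx gy : R -> R) (a b : R) : R :=
  RInt (fun t => P (gx t) (gy t) * Derive gx t + Q (gx t) (gy t) * Derive gy t) a b.

(* Clockwise parametrization of the circle x^2+y^2 = h:
   theta |-> (sqrt h * sin theta, sqrt h * cos theta). *)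
Definition cx (h : R) (t : R) : R := sqrt h * sin t.
Definition cy (h : R) (t : R) : R := sqrt h * cos t.

(* Angles of A = (-u, (-u)^m) and B = (u, u^m) in this parametrization. *)
Definition angA (m : nat) (h u : R) : R := - acos ((- u) ^ m / sqrt h).
Definition angB (m : nat) (h u : R) : R := acos (u ^ m / sqrt h).

(* Line integral over L_h^+ (clockwise from A to B, through the top point). *)
Definition lint_plus (m : nat) (h u : R) (P Q : R -> R -> R) : R :=
  lineint P Q (cx h) (cy h) (angA m h u) (angB m h u).

(* Line integral over L_h^- (clockwise from B to A, through the bottom point). *)
Definition lint_minus (m : nat) (h u : R) (P Q : R -> R -> R) : R :=
  lineint P Q (cx h) (cy h) (angB m h u) (2 * PI + angA m h u).

Definition melnikov (m n : nat) (ap bp am bm : nat -> nat -> R) (h u : R) : R :=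
  lint_plus m h u (fun x y => poly2 n bp x y) (fun x y => - poly2 n ap x y)
  + lint_minus m h u (fun x y => poly2 n bm x y) (fun x y => - poly2 n am x y).

Definition Jint (m : nat) (h u : R) (i j : nat) : R :=
  lint_plus m h u (fun x y => x ^ i * y ^ j) (fun _ _ => 0).
Definition Iint (m : nat) (h u : R) (i j : nat) : R :=
  lint_minus m h u (fun x y => x ^ i * y ^ j) (fun _ _ => 0).

From Stdlib Require Import Reals.
From Coquelicot Require Import Coquelicot.
Open Scope R_scope.
From Stdlib Require Import Lia Psatz.

(* Parametrise the circle by t |-> (sqrt h sin t, sqrt h cos t), so that dx = y dt and
   dy = - x dt.  A monomial term of q dx - p dy then integrates either x^i y^(j+1), which
   is J_(i,j) (resp. I_(i,j)), or x^(i+1) y^j.  For j >= 1 the latter is J_(i+1,j-1);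
   for j = 0, integrating d(x^i y) = (i x^(i-1) y^2 - x^(i+1)) dt by parts gives
   i J_(i-1,1) plus the values of x^i y at A = (-u, (-u)^m) and B = (u, u^m), i.e. a
   multiple of u^(i+m) with i + m <= n + m <= m (n + 1).  The functions of h having the
   shape of the right-hand side form a vector space, so M(h) has that shape. *)

Lemma sum_f_R0_kronecker (F : nat -> R) k N :
  sum_f_R0 (fun i => if Nat.eqb i k then F i else 0) N
  = if Nat.leb k N then F k else 0.
Proof.
  induction N as [|N IH].
  - destruct k; simpl; [reflexivity | ring].
  - rewrite tech5, IH.
    destruct (Nat.eqb_spec (S N) k), (Nat.leb_spec k N), (Nat.leb_spec k (S N));
      subst; try lia; ring.
Qed.

Lemma sum2_ext n F G :
  (forall i j, F i j = G i j) -> sum2 n F = sum2 n G.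
Proof. intros E; apply sum_eq; intros i _; apply sum_eq; intros j _; apply E. Qed.

Lemma poly2_sum2 n a x y : poly2 n a x y = sum2 n (fun i j => a i j * x ^ i * y ^ j).
Proof. reflexivity. Qed.

Lemma sum2_plus n F G :
  sum2 n (fun i j => F i j + G i j) = sum2 n F + sum2 n G.
Proof. unfold sum2; rewrite <- sum_plus; apply sum_eq; intros; apply sum_plus. Qed.

Lemma sum2_mult_r n F c :
  sum2 n F * c = sum2 n (fun i j => F i j * c).
Proof.
  unfold sum2; rewrite Rmult_comm, scal_sum.
  apply sum_eq; intros; rewrite Rmult_comm, scal_sum; reflexivity.
Qed.

Lemma sum2_coef_plus n a b (F : nat -> nat -> R) :
  sum2 n (fun i j => (a i j + b i j) * F i j)
  = sum2 n (fun i j => a i j * F i j) + sum2 n (fun i j => b i j * F i j).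
Proof. rewrite <- sum2_plus; apply sum2_ext; intros; ring. Qed.

Lemma sum2_coef_scal n k a (F : nat -> nat -> R) :
  sum2 n (fun i j => (k * a i j) * F i j) = k * sum2 n (fun i j => a i j * F i j).
Proof. rewrite Rmult_comm, sum2_mult_r; apply sum2_ext; intros; ring. Qed.

Lemma poly1_coef_plus d a b t :
  poly1 d (fun k => a k + b k) t = poly1 d a t + poly1 d b t.
Proof. unfold poly1; rewrite <- sum_plus; apply sum_eq; intros; ring. Qed.

Lemma poly1_coef_scal d k a t : poly1 d (fun i => k * a i) t = k * poly1 d a t.
Proof. unfold poly1; rewrite scal_sum; apply sum_eq; intros; ring. Qed.

Lemma sum2_zero_coef N (F : nat -> nat -> R) : sum2 N (fun i j => 0 * F i j) = 0.
Proof. apply sum_eq_R0; intros; apply sum_eq_R0; intros; ring. Qed.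

Lemma poly1_zero_coef d t : poly1 d (fun _ => 0) t = 0.
Proof. apply sum_eq_R0; intros; ring. Qed.

Definition kronecker2 (i0 j0 i j : nat) : R :=
  if (Nat.eqb i i0 && Nat.eqb j j0)%bool then 1 else 0.

Lemma sum2_kronecker n i0 j0 (F : nat -> nat -> R) : (i0 + j0 <= n)%nat ->
  sum2 n (fun i j => kronecker2 i0 j0 i j * F i j) = F i0 j0.
Proof.
  intros Hn; unfold sum2, kronecker2.
  transitivity (sum_f_R0 (fun i => if Nat.eqb i i0 then F i j0 else 0) n).
  - apply sum_eq; intros i _; destruct (Nat.eqb_spec i i0) as [->|]; simpl.
    + transitivity (sum_f_R0 (fun j => if Nat.eqb j j0 then F i0 j else 0) (n - i0)).
      * apply sum_eq; intros j _; destruct (Nat.eqb j j0); ring.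
      * rewrite sum_f_R0_kronecker, (proj2 (Nat.leb_le _ _)) by lia; reflexivity.
    + apply sum_eq_R0; intros; ring.
  - rewrite sum_f_R0_kronecker, (proj2 (Nat.leb_le _ _)) by lia; reflexivity.
Qed.

Lemma is_RInt_sum_f_R0 (f : nat -> R -> R) (l : nat -> R) a b N :
  (forall i, is_RInt (f i) a b (l i)) ->
  is_RInt (fun t => sum_f_R0 (fun i => f i t) N) a b (sum_f_R0 l N).
Proof.
  intros H; induction N as [|N IH]; [exact (H 0%nat) |].
  exact (is_RInt_plus _ _ _ _ _ _ IH (H (S N))).
Qed.

Lemma is_RInt_sum2 n (f : nat -> nat -> R -> R) (l : nat -> nat -> R) a b :
  (forall i j, is_RInt (f i j) a b (l i j)) ->
  is_RInt (fun t => sum2 n (fun i j => f i j t)) a b (sum2 n l).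
Proof. intros H; do 2 (apply is_RInt_sum_f_R0; intros); apply H. Qed.

Lemma Derive_cx h t : Derive (cx h) t = cy h t.
Proof. apply is_derive_unique; unfold cx, cy; auto_derive; [trivial | ring]. Qed.

Lemma Derive_cy h t : Derive (cy h) t = - cx h t.
Proof. apply is_derive_unique; unfold cx, cy; auto_derive; [trivial | ring]. Qed.

Definition circle_moment (h a b : R) (i j : nat) : R :=
  RInt (fun t => cx h t ^ i * cy h t ^ j) a b.

Lemma is_RInt_circle_moment h a b i j :
  is_RInt (fun t => cx h t ^ i * cy h t ^ j) a b (circle_moment h a b i j).
Proof.
  apply (RInt_correct (V := R_CompleteNormedModule)), ex_RInt_continuous.
  intros t _; apply (ex_derive_continuous (V := R_NormedModule)).
  unfold cx, cy; auto_derive; trivial.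
Qed.

Lemma circle_moment_ibp h a b k :
  circle_moment h a b (S k) 0
  = cx h a ^ k * cy h a - cx h b ^ k * cy h b + INR k * circle_moment h a b (pred k) 2.
Proof.
  assert (Hd : is_RInt (fun t => INR k * (cx h t ^ pred k * cy h t ^ 2) - cx h t ^ S k)
                 a b (cx h b ^ k * cy h b - cx h a ^ k * cy h a)).
  { apply (is_RInt_derive (fun t => cx h t ^ k * cy h t)); intros t _.
    - unfold cx, cy; auto_derive; [trivial | simpl; ring].
    - apply (ex_derive_continuous (V := R_NormedModule)); unfold cx, cy; auto_derive; trivial. }
  pose proof (is_RInt_minus _ _ _ _ _ _
    (is_RInt_scal _ _ _ (INR k) _ (is_RInt_circle_moment h a b (pred k) 2)) Hd) as Hm.
  apply (is_RInt_ext _ (fun t => cx h t ^ S k * cy h t ^ 0)) in Hm;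
    [| intros t _; unfold minus, plus, opp, scal; simpl; unfold mult; simpl; ring].
  unfold circle_moment at 1; rewrite (is_RInt_unique _ _ _ _ Hm).
  unfold minus, plus, opp, scal; simpl; unfold mult; simpl; ring.
Qed.

Lemma lineint_circle_poly2 n A B h a b :
  lineint (fun x y => poly2 n B x y) (fun x y => - poly2 n A x y) (cx h) (cy h) a b
  = sum2 n (fun i j => B i j * circle_moment h a b i (S j)
                       + A i j * circle_moment h a b (S i) j).
Proof.
  apply is_RInt_unique.
  apply (is_RInt_ext (fun t => sum2 n (fun i j =>
           B i j * (cx h t ^ i * cy h t ^ S j) + A i j * (cx h t ^ S i * cy h t ^ j)))).
  - intros t _; rewrite Derive_cx, Derive_cy, !poly2_sum2, Rmult_opp_opp.
    rewrite !sum2_mult_r, <- sum2_plus; apply sum2_ext; intros; simpl; ring.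
  - apply is_RInt_sum2; intros i j.
    apply (is_RInt_plus (V := R_NormedModule));
      apply (is_RInt_scal (V := R_NormedModule)), is_RInt_circle_moment.
Qed.

Lemma lineint_circle_monomial_dx h a b i j :
  lineint (fun x y => x ^ i * y ^ j) (fun _ _ => 0) (cx h) (cy h) a b
  = circle_moment h a b i (S j).
Proof.
  apply RInt_ext; intros t _; rewrite Derive_cx; simpl; ring.
Qed.

Lemma circle_acos_point h U w : 0 < U -> U ^ 2 + w ^ 2 = h ->
  cx h (acos (w / sqrt h)) = U /\ cy h (acos (w / sqrt h)) = w.
Proof.
  intros HU Hh.
  assert (Hs : 0 < sqrt h) by (apply sqrt_lt_R0; nra).
  assert (Hss : sqrt h * sqrt h = h) by (apply sqrt_sqrt; nra).
  assert (Hw : -1 <= w / sqrt h <= 1).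
  { assert (Hw2 : w * w < sqrt h * sqrt h) by nra.
    split; [apply Rmult_le_reg_r with (sqrt h) | apply Rmult_le_reg_r with (sqrt h)];
      field_simplify; nra. }
  unfold cx, cy; rewrite sin_acos, cos_acos by exact Hw.
  split; [| field; lra].
  rewrite <- sqrt_mult_alt by nra.
  replace (h * (1 - (w / sqrt h)²)) with (U²).
  2: { unfold Rsqr; field_simplify_eq; [| lra].
       replace (sqrt h ^ 2) with h by (simpl; lra); rewrite <- Hh; ring. }
  apply sqrt_Rsqr; lra.
Qed.

Lemma pow_pow_2 x m : (x ^ m) ^ 2 = (x ^ 2) ^ m.
Proof. rewrite <- !pow_mult, Nat.mul_comm; reflexivity. Qed.

Lemma circle_angB m h U : 0 < U -> U ^ 2 + U ^ (2 * m) = h ->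
  cx h (angB m h U) = U /\ cy h (angB m h U) = U ^ m.
Proof.
  intros HU Hh; apply circle_acos_point; [exact HU |].
  rewrite pow_pow_2, <- pow_mult; exact Hh.
Qed.

Lemma circle_angA m h U : 0 < U -> U ^ 2 + U ^ (2 * m) = h ->
  cx h (angA m h U) = - U /\ cy h (angA m h U) = (- U) ^ m.
Proof.
  intros HU Hh; unfold angA, cx, cy; rewrite sin_neg, cos_neg.
  destruct (circle_acos_point h U ((- U) ^ m)) as [Hx Hy]; [exact HU | |].
  - rewrite pow_pow_2; replace ((- U) ^ 2) with (U ^ 2) by ring.
    rewrite <- pow_mult; exact Hh.
  - unfold cx, cy in Hx, Hy; split; lra.
Qed.

Lemma circle_2PI_periodic h t :
  cx h (2 * PI + t) = cx h t /\ cy h (2 * PI + t) = cy h t.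
Proof.
  unfold cx, cy; rewrite sin_plus, cos_plus, sin_2PI, cos_2PI; split; ring.
Qed.

Section Span.

Variables (n d : nat) (J I : R -> nat -> nat -> R) (v : R -> R).

Definition in_span (f : R -> R) : Prop :=
  exists (rhop rhom : nat -> nat -> R) (c : nat -> R), forall h, 0 < h ->
    f h = sum2 n (fun i j => rhop i j * J h i j)
          + sum2 n (fun i j => rhom i j * I h i j) + poly1 d c (v h).

Lemma in_span_ext f g :
  in_span g -> (forall h, 0 < h -> f h = g h) -> in_span f.
Proof.
  intros (rhop & rhom & c & Hg) E.
  exists rhop, rhom, c; intros h Hh; rewrite E, Hg by exact Hh; reflexivity.
Qed.

Lemma in_span_add f g :
  in_span f -> in_span g -> in_span (fun h => f h + g h).
Proof.
  intros (rhop & rhom & c & Hf) (rhop' & rhom' & c' & Hg).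
  exists (fun i j => rhop i j + rhop' i j), (fun i j => rhom i j + rhom' i j),
    (fun k => c k + c' k).
  intros h Hh; rewrite Hf, Hg, !sum2_coef_plus, poly1_coef_plus by exact Hh; ring.
Qed.

Lemma in_span_scal k f : in_span f -> in_span (fun h => k * f h).
Proof.
  intros (rhop & rhom & c & Hf).
  exists (fun i j => k * rhop i j), (fun i j => k * rhom i j), (fun i => k * c i).
  intros h Hh; rewrite Hf, !sum2_coef_scal, poly1_coef_scal by exact Hh; ring.
Qed.

Lemma in_span_sum_f_R0 (f : nat -> R -> R) N :
  (forall i, (i <= N)%nat -> in_span (f i)) ->
  in_span (fun h => sum_f_R0 (fun i => f i h) N).
Proof.
  induction N as [|N IH]; intros Hf; [apply Hf; lia |].
  apply (in_span_add (fun h => sum_f_R0 (fun i => f i h) N) (f (S N))).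
  - apply IH; intros; apply Hf; lia.
  - apply Hf; lia.
Qed.

Lemma in_span_sum2 N (f : nat -> nat -> R -> R) :
  (forall i j, (i + j <= N)%nat -> in_span (f i j)) ->
  in_span (fun h => sum2 N (fun i j => f i j h)).
Proof.
  intros Hf; apply (in_span_sum_f_R0 (fun i h => sum_f_R0 (fun j => f i j h) (N - i))).
  intros i Hi; apply (in_span_sum_f_R0 (f i)); intros j Hj; apply Hf; lia.
Qed.

Lemma in_span_J i0 j0 : (i0 + j0 <= n)%nat -> in_span (fun h => J h i0 j0).
Proof.
  intros Hn; exists (kronecker2 i0 j0), (fun _ _ => 0), (fun _ => 0); intros h _.
  rewrite sum2_kronecker, sum2_zero_coef, poly1_zero_coef by exact Hn; ring.
Qed.

Lemma in_span_I i0 j0 : (i0 + j0 <= n)%nat -> in_span (fun h => I h i0 j0).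
Proof.
  intros Hn; exists (fun _ _ => 0), (kronecker2 i0 j0), (fun _ => 0); intros h _.
  rewrite sum2_kronecker, sum2_zero_coef, poly1_zero_coef by exact Hn; ring.
Qed.

Lemma in_span_monomial a k : (k <= d)%nat -> in_span (fun h => a * v h ^ k).
Proof.
  intros Hk; exists (fun _ _ => 0), (fun _ _ => 0), (fun i => if Nat.eqb i k then a else 0).
  intros h _; rewrite !sum2_zero_coef; unfold poly1.
  transitivity (sum_f_R0 (fun i => if Nat.eqb i k then a * v h ^ i else 0) d).
  - rewrite sum_f_R0_kronecker, (proj2 (Nat.leb_le _ _)) by exact Hk; reflexivity.
  - rewrite !Rplus_0_l; apply sum_eq; intros i _; destruct (Nat.eqb i k); ring.
Qed.

Lemma in_span_lineint_circle_poly2 A B (al be : R -> R) :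
  (forall i j, (i + j <= n)%nat ->
     in_span (fun h => circle_moment h (al h) (be h) i (S j))) ->
  (forall i, (i <= n)%nat ->
     in_span (fun h => cx h (al h) ^ i * cy h (al h) - cx h (be h) ^ i * cy h (be h))) ->
  in_span (fun h => lineint (fun x y => poly2 n B x y) (fun x y => - poly2 n A x y)
                      (cx h) (cy h) (al h) (be h)).
Proof.
  intros Hmom Hbd.
  eapply in_span_ext; [| intros h _; apply lineint_circle_poly2].
  apply (in_span_sum2 n (fun i j h => B i j * circle_moment h (al h) (be h) i (S j)
                                    + A i j * circle_moment h (al h) (be h) (S i) j)).
  intros i j Hij; apply in_span_add; apply in_span_scal; [apply Hmom, Hij |].
  destruct j as [|j]; [| apply Hmom; lia].
  eapply in_span_ext; [| intros h _; apply circle_moment_ibp].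
  destruct i as [|i].
  - eapply in_span_ext; [apply (Hbd 0%nat); lia | intros h _; simpl; ring].
  - apply in_span_add; [apply Hbd; lia | apply in_span_scal, Hmom; lia].
Qed.

Lemma in_span_circle_arc_boundary m (al be : R -> R) (sa sb : R) :
  (n + m <= d)%nat ->
  (forall h, 0 < h -> cx h (al h) = sa * v h /\ cy h (al h) = (sa * v h) ^ m) ->
  (forall h, 0 < h -> cx h (be h) = sb * v h /\ cy h (be h) = (sb * v h) ^ m) ->
  forall i, (i <= n)%nat ->
    in_span (fun h => cx h (al h) ^ i * cy h (al h) - cx h (be h) ^ i * cy h (be h)).
Proof.
  intros Hd Ha Hb i Hi.
  apply in_span_ext with (fun h => (sa ^ (i + m) - sb ^ (i + m)) * v h ^ (i + m)).
  - apply in_span_monomial; lia.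
  - intros h Hh; destruct (Ha h Hh) as [-> ->], (Hb h Hh) as [-> ->].
    rewrite !Rpow_mult_distr, !pow_add; ring.
Qed.

End Span.

Theorem lemma3p2 (m n : nat) (ap bp am bm : nat -> nat -> R) (u : R -> R) :
  (1 <= m)%nat ->
  (forall h, 0 < h -> 0 < u h /\ (u h) ^ 2 + (u h) ^ (2 * m) = h) ->
  exists (rhop rhom : nat -> nat -> R) (c : nat -> R),
    forall h, 0 < h ->
      melnikov m n ap bp am bm h (u h) =
        sum2 n (fun i j => rhop i j * Jint m h (u h) i j)
        + sum2 n (fun i j => rhom i j * Iint m h (u h) i j)
        + poly1 (m * (n + 1)) c (u h).
Proof.
  intros Hm Hu.
  assert (Hdeg : (n + m <= m * (n + 1))%nat) by nia.
  assert (HA : forall h, 0 < h -> cx h (angA m h (u h)) = -1 * u h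
                              /\ cy h (angA m h (u h)) = (-1 * u h) ^ m).
  { intros h Hh; destruct (Hu h Hh) as [Hpos Heq].
    replace (-1 * u h) with (- u h) by ring; exact (circle_angA m h (u h) Hpos Heq). }
  assert (HA' : forall h, 0 < h -> cx h (2 * PI + angA m h (u h)) = -1 * u h
                               /\ cy h (2 * PI + angA m h (u h)) = (-1 * u h) ^ m).
  { intros h Hh; destruct (circle_2PI_periodic h (angA m h (u h))) as [-> ->]; apply HA, Hh. }
  assert (HB : forall h, 0 < h -> cx h (angB m h (u h)) = 1 * u h
                              /\ cy h (angB m h (u h)) = (1 * u h) ^ m).
  { intros h Hh; destruct (Hu h Hh) as [Hpos Heq].
    rewrite Rmult_1_l; exact (circle_angB m h (u h) Hpos Heq). }
  apply (in_span_add _ _ _ _ _ (fun h => lint_plus m h (u h) _ _)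
                               (fun h => lint_minus m h (u h) _ _)).
  - apply in_span_lineint_circle_poly2.
    + intros i j Hij; eapply in_span_ext; [apply in_span_J, Hij |].
      intros h _; symmetry; apply lineint_circle_monomial_dx.
    + apply (in_span_circle_arc_boundary _ _ _ _ _ m _ _ (-1) 1); assumption.
  - apply in_span_lineint_circle_poly2.
    + intros i j Hij; eapply in_span_ext; [apply in_span_I, Hij |].
      intros h _; symmetry; apply lineint_circle_monomial_dx.
    + apply (in_span_circle_arc_boundary _ _ _ _ _ m _ _ 1 (-1)); assumption.
Qed.
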